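(* Consider the sub-$\ell^\infty$ structure on $\mathbb{R}^3$ defined by $X_1=\partial_x-\tfrac{y}{2}\partial_z$, $X_2=\partial_y+\tfrac{x}{2}\partial_z$. A regular bang-bang trajectory with more than $5$ arcs is not a time-minimizer.
   Context: Sub-$\ell^\infty$ structure defined by smooth vector fields $X_1,\dots,X_k$ on a manifold $M$: an admissible trajectory is an absolutely continuous curve $\gamma:[0,T]\to M$ together with a measurable control $u=(u_1,\dots,u_k):[0,T]\to\mathbb{R}^k$ with $|u_i(t)|\le1$ for all $i$ and a.e. $t$, such that $\dot\gamma(t)=\sum_i u_i(t)X_i(\gamma(t))$ for a.e. $t$. It is a time-minimizer (optimal) if no admissible trajectory joins $\gamma(0)$ to $\gamma(T)$ in time less than $T$. An extremal pair is a pair $(\lambda,\gamma)$ where $\gamma$ is admissible with control $u$ and $\lambda:[0,T]\to T^*M$ is absolutely continuous with $\lambda(t)\in T^*_{\gamma(t)}M\setminus\{0\}$, such that, with $\mathcal H(\lambda,p,u)=\sum_i u_i\langle\lambda,X_i(p)\rangle$, in canonical coordinates $\dot\lambda=-\partial_p\mathcal H(\lambda,\gamma,u)$, $\dot\gamma=\partial_\lambda\mathcal H(\lambda,\gamma,u)$ a.e., and there is a constant $\lambda_0\ge0$ with $\sum_iu_i(t)\langle\lambda(t),X_i(\gamma(t))\rangle=\sum_i|\langle\lambda(t),X_i(\gamma(t))\rangle|=\lambda_0$ for a.e. $t$; $\gamma$ is then an extremal trajectory and $\lambda$ an extremal lift. The switching functions are $\varphi_j(t)=\langle\lambda(t),X_j(\gamma(t))\rangle$.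 The restriction of an extremal pair to an open interval $I$ is a regular arc if $\varphi_j(t)\ne0$ for all $t\in I$ and all $j$; arcs are taken maximal (not contained in a strictly larger open interval with the same property). A regular bang-bang trajectory is an extremal trajectory with an extremal lift such that $[0,T]$ minus finitely many points is a finite union of maximal regular arcs (on each of which the control is then constant with values in $\{1,-1\}^k$); these are its arcs. *)

From Stdlib Require Import Reals List.
Open Scope R_scope.

(** Points / covectors of R^3 (canonical coordinates on T*R^3). *)
Definition R3 : Type := (R * R * R)%type.
Definition c0 (v : R3) : R := fst (fst v).
Definition c1 (v : R3) : R := snd (fst v).
Definition c2 (v : R3) : R := snd v.
Definition coord (k : nat) (v : R3) : R :=
  match k with 0%nat => c0 v | 1%nat => c1 v | _ => c2 v end.
Definition setc (k : nat) (v : R3) (s : R) : R3 :=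
  match k with
  | 0%nat => (s, c1 v, c2 v)
  | 1%nat => (c0 v, s, c2 v)
  | _ => (c0 v, c1 v, s)
  end.
Definition pairing (l v : R3) : R := c0 l * c0 v + c1 l * c1 v + c2 l * c2 v.

Definition X1 (p : R3) : R3 := (1, 0, - c1 p / 2).
Definition X2 (p : R3) : R3 := (0, 1, c0 p / 2).

Definition combo (u : R * R) (p : R3) : R3 :=
  (fst u * c0 (X1 p) + snd u * c0 (X2 p),
   fst u * c1 (X1 p) + snd u * c1 (X2 p),
   fst u * c2 (X1 p) + snd u * c2 (X2 p)).

Definition null_set (N : R -> Prop) : Prop :=
  forall eps, 0 < eps ->
    exists a b : nat -> R,
      (forall n, a n <= b n) /\
      (forall t, N t -> exists n, a n < t < b n) /\
      (forall n, sum_f_R0 (fun k => b k - a k) n <= eps).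

Definition ae_on (T : R) (P : R -> Prop) : Prop :=
  exists N, null_set N /\ forall t, 0 <= t <= T -> ~ N t -> P t.

(** Absolute continuity on [a,b]: finite families of non-overlapping
    subintervals a <= x1 <= y1 <= x2 <= y2 <= ... <= b. *)
Fixpoint chain (a : R) (l : list (R * R)) (b : R) : Prop :=
  match l with
  | nil => a <= b
  | (x, y) :: l' => a <= x /\ x <= y /\ chain y l' b
  end.

Definition abs_cont (f : R -> R) (a b : R) : Prop :=
  forall eps, 0 < eps -> exists delta, 0 < delta /\
    forall l, chain a l b ->
      fold_right (fun p acc => (snd p - fst p) + acc) 0 l < delta ->
      fold_right (fun p acc => Rabs (f (snd p) - f (fst p)) + acc) 0 l < eps.

Definition abs_cont3 (g : R -> R3) (a b : R) : Prop :=
  forall k, (k < 3)%nat -> abs_cont (fun t => coord k (g t)) a b.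

Definition admissible (g : R -> R3) (u : R -> R * R) (T : R) : Prop :=
  0 <= T /\ abs_cont3 g 0 T /\
  ae_on T (fun t => Rabs (fst (u t)) <= 1 /\ Rabs (snd (u t)) <= 1) /\
  ae_on T (fun t => forall k, (k < 3)%nat ->
      derivable_pt_lim (fun s => coord k (g s)) t (coord k (combo (u t) (g t)))).

Definition time_minimizer (g : R -> R3) (T : R) : Prop :=
  ~ exists (g' : R -> R3) (u' : R -> R * R) (T' : R),
      T' < T /\ admissible g' u' T' /\ g' 0 = g 0 /\ g' T' = g T.

Definition Ham (l p : R3) (u : R * R) : R :=
  fst u * pairing l (X1 p) + snd u * pairing l (X2 p).

Definition phi1 (l g : R -> R3) (t : R) : R := pairing (l t) (X1 (g t)).
Definition phi2 (l g : R -> R3) (t : R) : R := pairing (l t) (X2 (g t)).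

Definition extremal_pair (l g : R -> R3) (u : R -> R * R) (T : R) : Prop :=
  admissible g u T /\ abs_cont3 l 0 T /\
  (forall t, 0 <= t <= T -> l t <> (0, 0, 0)) /\
  ae_on T (fun t => forall k, (k < 3)%nat ->
     exists dHp dHl,
       derivable_pt_lim (fun s => Ham (l t) (setc k (g t) s) (u t)) (coord k (g t)) dHp /\
       derivable_pt_lim (fun s => Ham (setc k (l t) s) (g t) (u t)) (coord k (l t)) dHl /\
       derivable_pt_lim (fun s => coord k (l s)) t (- dHp) /\
       derivable_pt_lim (fun s => coord k (g s)) t dHl) /\
  exists lam0, 0 <= lam0 /\
    ae_on T (fun t =>
      fst (u t) * phi1 l g t + snd (u t) * phi2 l g t = lam0 /\
      Rabs (phi1 l g t) + Rabs (phi2 l g t) = lam0).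

Definition regular_on (l g : R -> R3) (a b : R) : Prop :=
  forall t, a < t < b -> phi1 l g t <> 0 /\ phi2 l g t <> 0.

Definition max_regular_arc (l g : R -> R3) (T a b : R) : Prop :=
  0 <= a /\ a < b /\ b <= T /\ regular_on l g a b /\
  forall a' b', 0 <= a' -> b' <= T -> a' <= a -> b <= b' ->
    regular_on l g a' b' -> a' = a /\ b' = b.

Definition regular_bang_bang_arcs (g : R -> R3) (T : R) (n : nat) : Prop :=
  exists (u : R -> R * R) (l : R -> R3) (arcs : list (R * R)) (F : list R),
    extremal_pair l g u T /\
    NoDup arcs /\ length arcs = n /\
    (forall ab, In ab arcs -> max_regular_arc l g T (fst ab) (snd ab)) /\
    (forall t, 0 <= t <= T -> ~ In t F ->
       exists ab, In ab arcs /\ fst ab < t < snd ab).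

From Pilot Require Import Defs.
From Stdlib Require Import Reals Ranalysis5 List Lra Lia Classical.
Open Scope R_scope.

(* Along an extremal the costate [lambda_z] is a constant [c], and the switching functions
   [phi1 = lambda_x - c y / 2] and [phi2 = lambda_y + c x / 2] satisfy [phi1' = - c u2] and
   [phi2' = c u1].  On a bang arc with control [(s1, s2)] the quantity [s1 phi1 + s2 phi2] is
   the constant [lam0], so every arc strictly inside [[0, T]] lasts exactly [lam0 / |c|], and
   at every switch exactly one control component changes sign, which one being dictated by
   the sign of [c].  Hence the last five arcs of a trajectory with six or more arcs have
   controls [a, b, -a, -b, a] and durations [tau, tau, tau, tau, s], while the four arcs with
   controls [-a, -b, a, b] and durations [tau, r, s + tau, r], [r = tau^2 / (s + tau) < tau],
   join the same endpoints faster.  The only analysis needed is that an absolutely continuous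
   function whose derivative is a.e. at least [m] grows at rate at least [m]; this follows by
   real induction, covering the exceptional null set by intervals of small total length. *)

Lemma Rabs_le_inv (x w : R) : Rabs x <= w -> - w <= x <= w.
Proof. unfold Rabs; destruct Rcase_abs; lra. Qed.

Definition chain_length (L : list (R * R)) : R :=
  fold_right (fun p acc => (snd p - fst p) + acc) 0 L.

Definition chain_variation (f : R -> R) (L : list (R * R)) : R :=
  fold_right (fun p acc => Rabs (f (snd p) - f (fst p)) + acc) 0 L.

Lemma fold_right_plus_shift (h : R * R -> R) (c : R) (L : list (R * R)) :
  fold_right (fun p acc => h p + acc) c L = fold_right (fun p acc => h p + acc) 0 L + c.
Proof. induction L as [|p L IH]; simpl; [lra | rewrite IH; lra]. Qed.

Lemma chain_length_snoc (L : list (R * R)) (x y : R) :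
  chain_length (L ++ (x, y) :: nil) = chain_length L + (y - x).
Proof.
  unfold chain_length; rewrite fold_right_app; simpl.
  rewrite (fold_right_plus_shift (fun p => snd p - fst p)); lra.
Qed.

Lemma chain_variation_snoc (f : R -> R) (L : list (R * R)) (x y : R) :
  chain_variation f (L ++ (x, y) :: nil) = chain_variation f L + Rabs (f y - f x).
Proof.
  unfold chain_variation; rewrite fold_right_app; simpl.
  rewrite (fold_right_plus_shift (fun p => Rabs (f (snd p) - f (fst p)))); lra.
Qed.

Lemma chain_snoc (a x y : R) (L : list (R * R)) :
  chain a L x -> x <= y -> chain a (L ++ (x, y) :: nil) y.
Proof.
  revert a; induction L as [|[p q] L IH]; simpl; intros a H1 H2; [lra|].
  destruct H1 as [? [? H1]]; repeat split; auto.
Qed.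

Lemma chain_widen (a a' b b' : R) (L : list (R * R)) :
  chain a L b -> a' <= a -> b <= b' -> chain a' L b'.
Proof.
  revert a a'; induction L as [|[p q] L IH]; simpl; intros a a' H1 H2 H3; [lra|].
  destruct H1 as [? [? H1]]; repeat split; try lra. apply (IH q q); auto; lra.
Qed.

Lemma chain_le (a b : R) (L : list (R * R)) : chain a L b -> a <= b.
Proof.
  revert a; induction L as [|[p q] L IH]; simpl; intros a H; [lra|].
  destruct H as [? [? H]]; apply IH in H; lra.
Qed.

Lemma chain_length_ge0 (a b : R) (L : list (R * R)) : chain a L b -> 0 <= chain_length L.
Proof.
  revert a; induction L as [|[p q] L IH]; simpl; intros a H; [unfold chain_length; simpl; lra|].
  destruct H as [? [? H]]; apply IH in H; unfold chain_length in *; simpl in *; lra.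
Qed.

Lemma abs_cont_sub (f : R -> R) (a b p q : R) :
  abs_cont f a b -> a <= p -> q <= b -> abs_cont f p q.
Proof.
  intros H Hp Hq eps He. destruct (H eps He) as [d [Hd H']]. exists d; split; auto.
  intros l Hl; apply H'. eapply chain_widen; eauto.
Qed.

Lemma abs_cont_opp (f : R -> R) (a b : R) : abs_cont f a b -> abs_cont (fun t => - f t) a b.
Proof.
  intros H eps He. destruct (H eps He) as [d [Hd H']]. exists d; split; auto.
  intros L Hc Hlen. specialize (H' L Hc Hlen).
  replace (fold_right (fun p acc => Rabs (- f (snd p) - - f (fst p)) + acc) 0 L)
    with (fold_right (fun p acc => Rabs (f (snd p) - f (fst p)) + acc) 0 L); auto.
  clear. induction L; simpl; auto. rewrite IHL. f_equal.
  rewrite <- Rabs_Ropp. f_equal; ring.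
Qed.

Lemma abs_cont_continuity_pt (f : R -> R) (a b t : R) :
  abs_cont f a b -> a < t < b -> continuity_pt f t.
Proof.
  intros H Ht eps He. destruct (H eps He) as [d [Hd H']].
  pose proof (Rmin_l d (Rmin (t - a) (b - t))); pose proof (Rmin_r d (Rmin (t - a) (b - t))).
  pose proof (Rmin_l (t - a) (b - t)); pose proof (Rmin_r (t - a) (b - t)).
  exists (Rmin d (Rmin (t - a) (b - t))); split; [repeat apply Rmin_pos; lra|]. intros s [_ Hs]. simpl in Hs |- *; unfold R_dist in Hs |- *.
  apply Rabs_def2 in Hs. destruct (Rle_dec s t).
  - specialize (H' ((s, t) :: nil)). simpl in H'.
    rewrite <- Rabs_Ropp, Ropp_minus_distr.
    cut (Rabs (f t - f s) + 0 < eps); [lra|]. apply H'; [repeat split; lra | lra].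
  - specialize (H' ((t, s) :: nil)). simpl in H'.
    cut (Rabs (f s - f t) + 0 < eps); [lra|]. apply H'; [repeat split; lra | lra].
Qed.

Lemma sum_f_R0_nonneg_mono (h : nat -> R) (n m : nat) :
  (forall k, 0 <= h k) -> (n <= m)%nat -> sum_f_R0 h n <= sum_f_R0 h m.
Proof.
  intros Hh Hnm; induction Hnm; [lra|]. rewrite tech5. specialize (Hh (S m)); lra.
Qed.

Lemma sum_f_R0_bump (h : nat -> R) (c : R) (n M : nat) : (n <= M)%nat ->
  sum_f_R0 (fun k => if Nat.eq_dec k n then h k + c else h k) M = sum_f_R0 h M + c.
Proof.
  induction M as [|M IH]; intros HM.
  - assert (n = 0%nat) by lia; subst. simpl. lra.
  - rewrite !tech5. destruct (Nat.eq_dec (S M) n) as [Heq|Hne].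
    + rewrite (sum_eq _ h); [lra|]. intros i Hi. destruct (Nat.eq_dec i n); [lia|auto].
    + rewrite IH by lia. lra.
Qed.

Lemma null_set_point (x : R) : null_set (fun t => t = x).
Proof.
  intros eps He.
  exists (fun n => match n with O => x - eps / 4 | S _ => 0 end).
  exists (fun n => match n with O => x + eps / 4 | S _ => 0 end).
  split; [intros [|n]; lra|]. split.
  - intros t ->; exists O; lra.
  - intros n; induction n; simpl; lra.
Qed.

Definition interleave (h1 h2 : nat -> R) (n : nat) : R :=
  if Nat.even n then h1 (Nat.div2 n) else h2 (Nat.div2 n).

Lemma interleave_even (h1 h2 : nat -> R) (k : nat) : interleave h1 h2 (2 * k) = h1 k.
Proof. unfold interleave; rewrite Nat.even_even, Nat.div2_double; auto. Qed.

Lemma interleave_odd (h1 h2 : nat -> R) (k : nat) : interleave h1 h2 (S (2 * k)) = h2 k.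
Proof.
  unfold interleave. rewrite Nat.div2_succ_double, Nat.even_succ, Nat.odd_mul.
  reflexivity.
Qed.

Lemma sum_interleave (h1 h2 : nat -> R) (n : nat) :
  sum_f_R0 (interleave h1 h2) (S (2 * n)) = sum_f_R0 h1 n + sum_f_R0 h2 n.
Proof.
  induction n as [|n IH].
  - simpl. unfold interleave; simpl. lra.
  - replace (S (2 * S n)) with (S (S (S (2 * n)))) by lia.
    rewrite tech5, tech5, IH, tech5, tech5.
    replace (S (S (2 * n))) with (2 * S n)%nat by lia.
    rewrite interleave_even, interleave_odd. lra.
Qed.

Lemma null_set_union (N1 N2 : R -> Prop) :
  null_set N1 -> null_set N2 -> null_set (fun t => N1 t \/ N2 t).
Proof.
  intros H1 H2 eps He.
  destruct (H1 (eps / 2) ltac:(lra)) as [a1 [b1 [Hab1 [Hc1 Hs1]]]].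
  destruct (H2 (eps / 2) ltac:(lra)) as [a2 [b2 [Hab2 [Hc2 Hs2]]]].
  assert (Hlen : forall k, interleave b1 b2 k - interleave a1 a2 k
                           = interleave (fun j => b1 j - a1 j) (fun j => b2 j - a2 j) k).
  { intros k; unfold interleave; destruct (Nat.even k); reflexivity. }
  exists (interleave a1 a2), (interleave b1 b2).
  split; [intros k; unfold interleave; destruct (Nat.even k); auto|]. split.
  - intros t [Ht|Ht].
    + destruct (Hc1 t Ht) as [k Hk]; exists (2 * k)%nat; rewrite !interleave_even; auto.
    + destruct (Hc2 t Ht) as [k Hk]; exists (S (2 * k)); rewrite !interleave_odd; auto.
  - intros n. rewrite (sum_eq _ _ n (fun k _ => Hlen k)).
    apply Rle_trans with
      (sum_f_R0 (interleave (fun j => b1 j - a1 j) (fun j => b2 j - a2 j)) (S (2 * n))).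
    + apply sum_f_R0_nonneg_mono; [|lia].
      intros k; unfold interleave; destruct (Nat.even k);
        [specialize (Hab1 (Nat.div2 k)) | specialize (Hab2 (Nat.div2 k))]; lra.
    + rewrite sum_interleave. specialize (Hs1 n); specialize (Hs2 n); lra.
Qed.

Lemma ae_on_and (T : R) (P Q : R -> Prop) :
  ae_on T P -> ae_on T Q -> ae_on T (fun t => P t /\ Q t).
Proof.
  intros [N1 [H1 P1]] [N2 [H2 P2]]. exists (fun t => N1 t \/ N2 t).
  split; [apply null_set_union; auto|]. intros t Ht Hn. split; [apply P1 | apply P2]; auto.
Qed.

Lemma derivable_pt_lim_first_order (f : R -> R) (t d e : R) : derivable_pt_lim f t d -> 0 < e ->
  exists del, 0 < del /\ forall s, Rabs (s - t) < del ->
    Rabs (f s - f t - d * (s - t)) <= e * Rabs (s - t).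
Proof.
  intros H He. destruct (H e He) as [del Hd]. exists del; split; [apply cond_pos|].
  intros s Hs. destruct (Req_dec s t) as [->|Hne].
  - rewrite !Rminus_diag, Rmult_0_r, Rminus_0_r, Rabs_R0; lra.
  - specialize (Hd (s - t) ltac:(lra) Hs). replace (t + (s - t)) with s in Hd by ring.
    replace (f s - f t - d * (s - t)) with (((f s - f t) / (s - t) - d) * (s - t)) by (field; lra).
    rewrite Rabs_mult. apply Rmult_le_compat_r; [apply Rabs_pos | lra].
Qed.

Lemma real_induction (P : R -> Prop) (a b : R) : a <= b -> P a ->
  (forall t, a <= t <= b -> exists dt, 0 < dt /\
     forall x y, a <= x -> x <= t -> t <= y -> y <= b -> t - x < dt -> y - t < dt -> P x -> P y) ->
  P b.
Proof.
  intros Hab HPa Hstep.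
  set (E := fun x => a <= x <= b /\ P x).
  destruct (completeness E) as [s [Hub Hlub]].
  { exists b. intros x Hx; apply Hx. }
  { exists a; split; auto; lra. }
  assert (Has : a <= s) by (apply Hub; split; auto; lra).
  assert (Hsb : s <= b) by (apply Hlub; intros x Hx; apply Hx).
  destruct (Hstep s ltac:(lra)) as [dt [Hdt Hs]].
  assert (HPs : P s).
  { destruct (classic (exists x, E x /\ s - dt < x)) as [[x [[Hx1 Hx2] Hx3]]|Hno].
    - assert (x <= s) by (apply Hub; split; auto).
      apply (Hs x s); auto; lra.
    - exfalso. assert (s <= s - dt); [|lra].
      apply Hlub. intros x Hx. apply Rnot_lt_le. intros Hlt. apply Hno; eauto. }
  destruct (Req_dec s b) as [<-|Hne]; [exact HPs|exfalso].
  pose proof (Rmin_l b (s + dt / 2)); pose proof (Rmin_r b (s + dt / 2)).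
  assert (Hsy : s < Rmin b (s + dt / 2)) by (apply Rmin_glb_lt; lra).
  set (y := Rmin b (s + dt / 2)) in *.
  assert (E y) by (split; [lra | apply (Hs s y); auto; lra]).
  assert (y <= s) by (apply Hub; auto). lra.
Qed.

Section Creeping.

Variables (f : R -> R) (a m eps : R) (ak bk : nat -> R).

(* [use k] is the part of the chain [L] lying in the [k]-th covering interval; it never
   exceeds the part of that interval to the left of [x], so later pieces still fit in it. *)
Definition creep_inv (x : R) : Prop :=
  exists L use M, chain a L x /\
    (forall k, 0 <= use k <= Rmax 0 (x - ak k) /\ use k <= bk k - ak k) /\
    chain_length L <= sum_f_R0 use M /\
    (m - eps) * (x - a) - chain_variation f L - (Rabs m + eps) * chain_length L <= f x - f a.

Lemma creep_inv_start : (forall k, ak k <= bk k) -> creep_inv a.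
Proof.
  intros Hab. exists nil, (fun _ => 0), O. simpl. split; [lra|]. split.
  - intros k; split; [split; [lra | apply Rmax_l]|]. specialize (Hab k); lra.
  - unfold chain_length, chain_variation; simpl. lra.
Qed.

Lemma creep_inv_cover_step (n : nat) (x y : R) :
  0 <= eps -> ak n < x -> x <= y -> y < bk n -> creep_inv x -> creep_inv y.
Proof.
  intros He Hx Hxy Hy [L [use [M [Hch [Hu [Hl Hf]]]]]].
  exists (L ++ (x, y) :: nil), (fun k => if Nat.eq_dec k n then use k + (y - x) else use k),
    (Nat.max M n).
  split; [apply chain_snoc; auto|]. split; [|split].
  - intros k. destruct (Hu k) as [[U1 U2] U3]; destruct (Nat.eq_dec k n) as [->|Hk].
    + rewrite Rmax_right in U2 by lra. rewrite Rmax_right by lra. lra.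
    + split; auto. split; auto. apply Rle_trans with (1 := U2), Rle_max_compat_l; lra.
  - rewrite chain_length_snoc, sum_f_R0_bump by lia.
    assert (sum_f_R0 use M <= sum_f_R0 use (Nat.max M n))
      by (apply sum_f_R0_nonneg_mono; [intros k; apply Hu | lia]).
    lra.
  - rewrite chain_length_snoc, chain_variation_snoc.
    pose proof (Rle_abs m). pose proof (Rabs_le_inv (f y - f x) _ (Rle_refl _)).
    assert ((m - eps) * (y - x) <= (Rabs m + eps) * (y - x)) by (apply Rmult_le_compat_r; lra).
    nra.
Qed.

Lemma creep_inv_deriv_step (t d dt x y : R) :
  (forall s, Rabs (s - t) < dt -> Rabs (f s - f t - d * (s - t)) <= eps * Rabs (s - t)) ->
  m <= d -> x <= t -> t <= y -> t - x < dt -> y - t < dt -> creep_inv x -> creep_inv y.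
Proof.
  intros Hloc Hmd Hxt Hty Hx Hy [L [use [M [Hch [Hu [Hl Hf]]]]]].
  exists L, use, M. split; [apply (chain_widen a a x y); auto; lra|]. split; [|split; auto].
  - intros k. destruct (Hu k) as [[U1 U2] U3]. split; auto. split; auto.
    apply Rle_trans with (1 := U2), Rle_max_compat_l; lra.
  - assert (H1 := Hloc y ltac:(apply Rabs_def1; lra)).
    assert (H2 := Hloc x ltac:(apply Rabs_def1; lra)).
    rewrite (Rabs_right (y - t)) in H1 by lra. rewrite (Rabs_left1 (x - t)) in H2 by lra.
    apply Rabs_le_inv in H1. apply Rabs_le_inv in H2.
    assert ((m - eps) * (y - t) <= (d - eps) * (y - t)) by (apply Rmult_le_compat_r; lra).
    assert ((m - eps) * (t - x) <= (d - eps) * (t - x)) by (apply Rmult_le_compat_r; lra).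
    nra.
Qed.

End Creeping.

Lemma ac_increment_ge_approx (f : R -> R) (a b m : R) (N : R -> Prop) :
  a <= b -> abs_cont f a b -> null_set N ->
  (forall t, a <= t <= b -> ~ N t -> exists d, derivable_pt_lim f t d /\ m <= d) ->
  forall eps, 0 < eps -> (m - eps) * (b - a) - eps - (Rabs m + eps) * eps <= f b - f a.
Proof.
  intros Hab HAC HN Hder eps Heps.
  destruct (HAC eps Heps) as [del [Hdel HAC']].
  pose proof (Rmin_l del eps); pose proof (Rmin_r del eps).
  assert (Hd : 0 < Rmin del eps / 2) by (assert (0 < Rmin del eps) by (apply Rmin_pos; lra); lra).
  destruct (HN _ Hd) as [ak [bk [Habk [Hcov Hsum]]]].
  assert (Hb : creep_inv f a m eps ak bk b).
  { apply (real_induction _ a b); [exact Hab | apply creep_inv_start; exact Habk|].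
    intros t Ht. destruct (classic (N t)) as [HNt|HNt].
    - destruct (Hcov t HNt) as [n Hn].
      pose proof (Rmin_l (t - ak n) (bk n - t)); pose proof (Rmin_r (t - ak n) (bk n - t)).
      exists (Rmin (t - ak n) (bk n - t)). split; [apply Rmin_pos; lra|].
      intros x y _ Hxt Hty _ Hx Hy. apply (creep_inv_cover_step _ _ _ _ _ _ n x); lra.
    - destruct (Hder t Ht HNt) as [d [Hdt Hmd]].
      destruct (derivable_pt_lim_first_order f t d eps Hdt Heps) as [dt [Hdt' Hloc]].
      exists dt; split; auto. intros x y _ Hxt Hty _.
      exact (creep_inv_deriv_step f a m eps ak bk t d dt x y Hloc Hmd Hxt Hty). }
  destruct Hb as [L [use [M [Hch [Hu [Hl Hf]]]]]].
  assert (sum_f_R0 use M <= Rmin del eps / 2).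
  { apply Rle_trans with (sum_f_R0 (fun k => bk k - ak k) M); [|apply Hsum].
    apply sum_Rle; intros; apply Hu. }
  assert (Hvar : chain_variation f L < eps) by (apply HAC'; auto; fold (chain_length L); lra).
  pose proof (chain_length_ge0 _ _ _ Hch). pose proof (Rabs_pos m).
  assert ((Rabs m + eps) * chain_length L <= (Rabs m + eps) * eps)
    by (apply Rmult_le_compat_l; lra).
  lra.
Qed.

Lemma ac_increment_ge (f : R -> R) (a b m : R) (N : R -> Prop) :
  a <= b -> abs_cont f a b -> null_set N ->
  (forall t, a < t < b -> ~ N t -> exists d, derivable_pt_lim f t d /\ m <= d) ->
  m * (b - a) <= f b - f a.
Proof.
  intros Hab HAC HN Hder. apply Rnot_lt_le; intros Hlt.
  set (gap := m * (b - a) - (f b - f a)).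
  set (K := b - a + Rabs m + 3).
  pose proof (Rabs_pos m).
  assert (HK : 0 < K) by (unfold K; lra).
  set (eps := Rmin 1 (gap / K)).
  assert (He : 0 < eps) by (apply Rmin_pos; [lra | apply Rdiv_lt_0_compat; unfold gap; lra]).
  assert (He1 : eps <= 1) by apply Rmin_l.
  assert (He2 : eps * K <= gap).
  { pose proof (Rmin_r 1 (gap / K)) as Hr; fold eps in Hr.
    apply Rle_trans with (gap / K * K); [apply Rmult_le_compat_r; lra | right; field; lra]. }
  assert (Hends : null_set (fun t => N t \/ t = a \/ t = b))
    by (apply null_set_union, null_set_union; auto using null_set_point).
  assert (Hder' : forall t, a <= t <= b -> ~ (N t \/ t = a \/ t = b) ->
                   exists d, derivable_pt_lim f t d /\ m <= d).
  { intros t [Hat Htb] HNt. apply Hder; [|tauto].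
    destruct Hat as [Hat|Hat]; [|subst; tauto]. destruct Htb as [Htb|Htb]; [lra|subst; tauto]. }
  pose proof (ac_increment_ge_approx f a b m _ Hab HAC Hends Hder' eps He).
  assert ((Rabs m + eps) * eps <= (Rabs m + 1) * eps) by (apply Rmult_le_compat_r; lra).
  unfold K, gap in *. nra.
Qed.

Lemma ac_increment_le (f : R -> R) (a b M : R) (N : R -> Prop) :
  a <= b -> abs_cont f a b -> null_set N ->
  (forall t, a < t < b -> ~ N t -> exists d, derivable_pt_lim f t d /\ d <= M) ->
  f b - f a <= M * (b - a).
Proof.
  intros Hab HAC HN Hd.
  cut (- M * (b - a) <= - f b - - f a); [lra|].
  apply (ac_increment_ge (fun t => - f t) a b (- M) N Hab (abs_cont_opp f a b HAC) HN).
  intros t Ht HNt. destruct (Hd t Ht HNt) as [d [H1 H2]].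
  exists (- d). split; [apply derivable_pt_lim_opp; exact H1 | lra].
Qed.

Lemma ac_increment_eq (f : R -> R) (a b m : R) (N : R -> Prop) :
  a <= b -> abs_cont f a b -> null_set N ->
  (forall t, a < t < b -> ~ N t -> derivable_pt_lim f t m) ->
  f b = f a + m * (b - a).
Proof.
  intros Hab HAC HN Hd.
  pose proof (ac_increment_ge f a b m N Hab HAC HN
    ltac:(intros t Ht HNt; exists m; split; auto; lra)).
  pose proof (ac_increment_le f a b m N Hab HAC HN
    ltac:(intros t Ht HNt; exists m; split; auto; lra)).
  lra.
Qed.

Lemma ac_increment_abs (f : R -> R) (a b K : R) (N : R -> Prop) :
  a <= b -> abs_cont f a b -> null_set N ->
  (forall t, a < t < b -> ~ N t -> exists d, derivable_pt_lim f t d /\ Rabs d <= K) ->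
  Rabs (f b - f a) <= K * (b - a).
Proof.
  intros Hab HAC HN Hd. apply Rabs_le. split.
  - cut (- K * (b - a) <= f b - f a); [lra|].
    apply (ac_increment_ge f a b (- K) N Hab HAC HN).
    intros t Ht HNt. destruct (Hd t Ht HNt) as [d [H1 H2]].
    apply Rabs_le_inv in H2. exists d; split; auto; lra.
  - apply (ac_increment_le f a b K N Hab HAC HN).
    intros t Ht HNt. destruct (Hd t Ht HNt) as [d [H1 H2]].
    apply Rabs_le_inv in H2. exists d; split; auto; lra.
Qed.

Definition lipschitz_on (f : R -> R) (a b K : R) : Prop :=
  forall x y, a <= x -> x <= y -> y <= b -> Rabs (f y - f x) <= K * (y - x).

Lemma lipschitz_chain_variation (f : R -> R) (a b K x : R) (L : list (R * R)) :
  0 <= K -> lipschitz_on f a b K -> chain x L b -> a <= x ->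
  chain_variation f L <= K * chain_length L.
Proof.
  intros HK Hl. revert x; induction L as [|[p q] L IH]; intros x Hc Hx.
  - unfold chain_variation, chain_length; simpl; lra.
  - destruct Hc as [H1 [H2 H3]].
    assert (q <= b) by (apply chain_le in H3; auto).
    specialize (IH q H3 ltac:(lra)). specialize (Hl p q ltac:(lra) H2 H).
    unfold chain_variation, chain_length in *; simpl in *. lra.
Qed.

Lemma lipschitz_abs_cont (f : R -> R) (a b K : R) :
  0 <= K -> lipschitz_on f a b K -> abs_cont f a b.
Proof.
  intros HK Hl eps He. exists (eps / (K + 1)). split; [apply Rdiv_lt_0_compat; lra|].
  intros L Hc Hlen. fold (chain_length L) in Hlen. fold (chain_variation f L).
  pose proof (lipschitz_chain_variation f a b K a L HK Hl Hc ltac:(lra)).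
  pose proof (chain_length_ge0 _ _ _ Hc).
  assert (K * chain_length L <= K * (eps / (K + 1))) by (apply Rmult_le_compat_l; lra).
  assert (K * (eps / (K + 1)) < eps).
  { apply Rmult_lt_reg_r with (K + 1); [lra|]. unfold Rdiv.
    replace (K * (eps * / (K + 1)) * (K + 1)) with (K * eps) by (field; lra). nra. }
  lra.
Qed.

Lemma lipschitz_on_concat (f : R -> R) (a b c K : R) :
  lipschitz_on f a b K -> lipschitz_on f b c K -> lipschitz_on f a c K.
Proof.
  intros H1 H2 x y Hx Hxy Hy.
  destruct (Rle_dec y b); [apply H1; lra|]. destruct (Rle_dec b x); [apply H2; lra|].
  specialize (H1 x b ltac:(lra) ltac:(lra) ltac:(lra)).
  specialize (H2 b y ltac:(lra) ltac:(lra) ltac:(lra)).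
  replace (f y - f x) with ((f y - f b) + (f b - f x)) by ring.
  pose proof (Rabs_triang (f y - f b) (f b - f x)). lra.
Qed.

Lemma lipschitz_on_ext (f h : R -> R) (a b K : R) :
  (forall t, a <= t <= b -> f t = h t) -> lipschitz_on h a b K -> lipschitz_on f a b K.
Proof. intros He H x y Hx Hxy Hy. rewrite !He by lra. auto. Qed.

Lemma lipschitz_on_weaken (f : R -> R) (a b a' b' K K' : R) :
  a <= a' -> b' <= b -> K <= K' -> lipschitz_on f a b K -> lipschitz_on f a' b' K'.
Proof. intros Ha Hb HK H x y Hx Hxy Hy. specialize (H x y ltac:(lra) Hxy ltac:(lra)). nra. Qed.

Lemma lipschitz_on_affine (A B a b : R) : lipschitz_on (fun t => A + B * t) a b (Rabs B).
Proof.
  intros x y _ Hxy _. replace (A + B * y - (A + B * x)) with (B * (y - x)) by ring.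
  rewrite Rabs_mult, (Rabs_right (y - x)) by lra. lra.
Qed.

Lemma null_set_complement_meets (N : R -> Prop) (a b : R) :
  null_set N -> a < b -> exists t, a < t < b /\ ~ N t.
Proof.
  intros HN Hab. apply NNPP; intros Hno.
  assert (Hac : abs_cont (fun t => 0 + -1 * t) a b).
  { apply (lipschitz_abs_cont _ a b 1); [lra|].
    apply (lipschitz_on_weaken _ a b a b (Rabs (-1))); try lra; [|apply lipschitz_on_affine].
    rewrite Rabs_left by lra; lra. }
  assert (0 * (b - a) <= (0 + -1 * b) - (0 + -1 * a)); [|lra].
  apply (ac_increment_ge _ a b 0 N ltac:(lra) Hac HN).
  intros t Ht HNt. exfalso; apply Hno; eauto.
Qed.

Definition is_sign (s : R) : Prop := s = 1 \/ s = -1.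

Lemma is_sign_abs (s x : R) : is_sign s -> s * x > 0 -> Rabs x = s * x.
Proof. intros [-> | ->] H; [rewrite Rabs_right | rewrite Rabs_left]; lra. Qed.

Lemma continuous_nonzero_same_sign (F : R -> R) (x y : R) : x <= y ->
  (forall z, x <= z <= y -> continuity_pt F z /\ F z <> 0) -> 0 < F x * F y.
Proof.
  intros Hxy HF.
  assert (Fx := proj2 (HF x ltac:(lra))). assert (Fy := proj2 (HF y ltac:(lra))).
  destruct (Rlt_dec 0 (F x * F y)) as [|Hnot]; auto. exfalso.
  assert (F x * F y <> 0) by (apply Rmult_integral_contrapositive; auto).
  destruct Hxy as [Hxy|<-]; [|nra].
  assert (Hc : forall z, x <= z <= y -> continuity_pt F z) by (intros; apply HF; auto).
  destruct (Rlt_dec (F x) 0).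
  - destruct (IVT_interv F x y Hc Hxy) as [w [Hw Hw0]]; [lra | nra |].
    exact (proj2 (HF w Hw) Hw0).
  - destruct (IVT_interv (fun z => - F z) x y) as [w [Hw Hw0]];
      [intros z Hz; apply continuity_pt_opp, Hc; auto | auto | nra | nra |].
    apply (proj2 (HF w Hw)); lra.
Qed.

Lemma continuous_nonzero_sign (F : R -> R) (x y : R) : x < y ->
  (forall z, x < z < y -> continuity_pt F z /\ F z <> 0) ->
  exists s, is_sign s /\ forall z, x < z < y -> s * F z > 0.
Proof.
  intros Hxy HF. set (m := (x + y) / 2).
  assert (Hm : x < m < y) by (unfold m; lra).
  assert (Hsame : forall z, x < z < y -> 0 < F m * F z).
  { intros z Hz. destruct (Rle_dec m z).
    - apply (continuous_nonzero_same_sign F m z); auto. intros w Hw; apply HF; lra.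
    - rewrite Rmult_comm. apply (continuous_nonzero_same_sign F z m); [lra|].
      intros w Hw; apply HF; lra. }
  destruct (Rlt_dec 0 (F m)).
  - exists 1. split; [left; auto|]. intros z Hz. specialize (Hsame z Hz). nra.
  - exists (-1). split; [right; auto|]. intros z Hz. specialize (Hsame z Hz). nra.
Qed.

Lemma continuity_pt_pos_near (F : R -> R) (t : R) : continuity_pt F t -> 0 < F t ->
  exists d, 0 < d /\ forall s, Rabs (s - t) < d -> 0 < F s.
Proof.
  intros H Hp. destruct (H (F t) Hp) as [d [Hd H']]. exists d; split; [lra|].
  intros s Hs. destruct (Req_dec s t) as [->|Hne]; auto.
  specialize (H' s (conj (conj I (not_eq_sym Hne)) Hs)). simpl in H'; unfold R_dist in H'.
  apply Rabs_def2 in H'. lra.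
Qed.

Definition coordf (h : R -> R3) (k : nat) (t : R) : R := coord k (h t).

(* [- dH/dp_k], the right-hand side of the equation for the [k]-th costate coordinate. *)
Definition costate_rate (l : R3) (w : R * R) (k : nat) : R :=
  match k with
  | 0%nat => - snd w * c2 l / 2
  | 1%nat => fst w * c2 l / 2
  | _ => 0
  end.

Definition extremal_at (g l : R -> R3) (u : R -> R * R) (lam0 t : R) : Prop :=
  (forall k, (k < 3)%nat -> derivable_pt_lim (coordf g k) t (coord k (combo (u t) (g t)))) /\
  (forall k, (k < 3)%nat -> derivable_pt_lim (coordf l k) t (costate_rate (l t) (u t) k)) /\
  Rabs (fst (u t)) <= 1 /\ Rabs (snd (u t)) <= 1 /\
  fst (u t) * phi1 l g t + snd (u t) * phi2 l g t = lam0 /\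
  Rabs (phi1 l g t) + Rabs (phi2 l g t) = lam0.

Lemma Ham_setc_affine (l p : R3) (w : R * R) (k : nat) :
  forall s, Ham l (setc k p s) w = Ham l (setc k p 0) w + - costate_rate l w k * s.
Proof.
  intros s. destruct k as [|[|k]];
    unfold Ham, pairing, X1, X2, setc, costate_rate, c0, Defs.c1, c2; simpl; field.
Qed.

Lemma derivable_pt_lim_affine (F : R -> R) (A B x : R) :
  (forall s, F s = A + B * s) -> derivable_pt_lim F x B.
Proof.
  intros HF eps He. exists (mkposreal 1 Rlt_0_1). intros h Hh _.
  rewrite !HF. replace ((A + B * (x + h) - (A + B * x)) / h - B) with 0 by (field; auto).
  rewrite Rabs_R0; auto.
Qed.

Lemma extremal_pair_ae (g l : R -> R3) (u : R -> R * R) (T : R) : extremal_pair l g u T ->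
  exists N lam0, null_set N /\ forall t, 0 <= t <= T -> ~ N t -> extremal_at g l u lam0 t.
Proof.
  intros [[_ [_ [Hu Hdg]]] [_ [_ [Hext [lam0 [_ Hlam]]]]]].
  destruct (ae_on_and _ _ _ Hu (ae_on_and _ _ _ Hdg (ae_on_and _ _ _ Hext Hlam)))
    as [N [HN HP]].
  exists N, lam0. split; auto.
  intros t Ht HNt. destruct (HP t Ht HNt) as [[Hu1 Hu2] [Hg [He [Hm1 Hm2]]]].
  split; [exact Hg|]. split; [|auto].
  intros k Hk. destruct (He k Hk) as [dHp [dHl [Dp [_ [Dl _]]]]].
  replace (costate_rate (l t) (u t) k) with (- dHp); [exact Dl|].
  pose proof (uniqueness_limite _ _ _ _ Dp
    (derivable_pt_lim_affine _ _ _ _ (Ham_setc_affine (l t) (g t) (u t) k))) as E.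
  lra.
Qed.

Lemma phi1_eq (l g : R -> R3) (t : R) :
  phi1 l g t = coordf l 0 t - coordf l 2 t * coordf g 1 t / 2.
Proof. unfold phi1, pairing, X1, coordf, coord, c0, Defs.c1, c2; simpl; field. Qed.

Lemma phi2_eq (l g : R -> R3) (t : R) :
  phi2 l g t = coordf l 1 t + coordf l 2 t * coordf g 0 t / 2.
Proof. unfold phi2, pairing, X2, coordf, coord, c0, Defs.c1, c2; simpl; field. Qed.

Definition velocity (p : R3) (w : R * R) (k : nat) : R :=
  match k with
  | 0%nat => fst w
  | 1%nat => snd w
  | _ => (- fst w * Defs.c1 p + snd w * c0 p) / 2
  end.

Lemma coord_combo (w : R * R) (p : R3) (k : nat) : coord k (combo w p) = velocity p w k.
Proof. destruct k as [|[|k]]; unfold combo, velocity, X1, X2, coord, c0, Defs.c1, c2; simpl; field. Qed.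

Lemma mul_le_abs (v p : R) : Rabs v <= 1 -> v * p <= Rabs p.
Proof.
  intros H. apply Rle_trans with (Rabs (v * p)); [apply Rle_abs|]. rewrite Rabs_mult.
  pose proof (Rabs_pos p); pose proof (Rabs_pos v); nra.
Qed.

Lemma control_fst_sign (g l : R -> R3) (u : R -> R * R) (lam0 t s : R) :
  extremal_at g l u lam0 t -> is_sign s -> s * phi1 l g t > 0 -> fst (u t) = s.
Proof.
  intros (_&_&H1&H2&H3&H4) Hs Hp.
  pose proof (mul_le_abs _ (phi2 l g t) H2). apply Rabs_le_inv in H1.
  rewrite (is_sign_abs s _ Hs Hp) in H4. destruct Hs as [-> | ->]; nra.
Qed.

Lemma control_snd_sign (g l : R -> R3) (u : R -> R * R) (lam0 t s : R) :
  extremal_at g l u lam0 t -> is_sign s -> s * phi2 l g t > 0 -> snd (u t) = s.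
Proof.
  intros (_&_&H1&H2&H3&H4) Hs Hp.
  pose proof (mul_le_abs _ (phi1 l g t) H1). apply Rabs_le_inv in H2.
  rewrite (is_sign_abs s _ Hs Hp) in H4. destruct Hs as [-> | ->]; nra.
Qed.

Lemma abs_cont3_increment (h : R -> R3) (k : nat) (T p q m : R) (N : R -> Prop) :
  abs_cont3 h 0 T -> null_set N -> (k < 3)%nat -> 0 <= p -> p <= q -> q <= T ->
  (forall t, p < t < q -> ~ N t -> derivable_pt_lim (coordf h k) t m) ->
  coordf h k q = coordf h k p + m * (q - p).
Proof.
  intros Hac HN Hk Hp Hpq Hq. apply (ac_increment_eq _ p q m N Hpq); auto.
  apply (abs_cont_sub _ 0 T); auto. exact (Hac k Hk).
Qed.

Definition extremal_data (g l : R -> R3) (u : R -> R * R) (lam0 T : R) (N : R -> Prop) : Prop :=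
  abs_cont3 g 0 T /\ abs_cont3 l 0 T /\ null_set N /\
  forall t, 0 <= t <= T -> ~ N t -> extremal_at g l u lam0 t.

(* [coordf l 2 0] is the constant costate [c = lambda_z]. *)
Definition bang_arc (g l : R -> R3) (lam0 a b s1 s2 : R) : Prop :=
  is_sign s1 /\ is_sign s2 /\
  (forall t, a < t < b -> s1 * phi1 l g t > 0 /\ s2 * phi2 l g t > 0) /\
  (forall t, a <= t <= b ->
     s1 * phi1 l g t = s1 * phi1 l g a - coordf l 2 0 * s1 * s2 * (t - a) /\
     s2 * phi2 l g t = s2 * phi2 l g a + coordf l 2 0 * s1 * s2 * (t - a)) /\
  s1 * phi1 l g a + s2 * phi2 l g a = lam0.

Definition flow (P : R3) (w : R * R) (s : R) : R3 :=
  (c0 P + velocity P w 0 * s, Defs.c1 P + velocity P w 1 * s, c2 P + velocity P w 2 * s).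

Lemma R3_ext (P Q : R3) : c0 P = c0 Q -> Defs.c1 P = Defs.c1 Q -> c2 P = c2 Q -> P = Q.
Proof. destruct P as [[x y] z], Q as [[x' y'] z']. unfold c0, Defs.c1, c2; simpl. intros -> -> ->; auto. Qed.

Lemma bang_arc_lam0_pos (g l : R -> R3) (lam0 a b s1 s2 : R) :
  a < b -> bang_arc g l lam0 a b s1 s2 -> 0 < lam0.
Proof.
  intros Hab (_ & _ & Hsg & Hf & Hl). destruct (Hsg ((a + b) / 2) ltac:(lra)) as [P1 P2].
  destruct (Hf ((a + b) / 2) ltac:(lra)) as [F1 F2]. lra.
Qed.

Lemma bang_arc_start_switch (g l : R -> R3) (lam0 a b s1 s2 : R) :
  a < b -> bang_arc g l lam0 a b s1 s2 -> phi1 l g a = 0 \/ phi2 l g a = 0 ->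
  (phi1 l g a = 0 /\ coordf l 2 0 * s1 * s2 < 0 /\ s2 * phi2 l g a = lam0) \/
  (phi2 l g a = 0 /\ coordf l 2 0 * s1 * s2 > 0 /\ s1 * phi1 l g a = lam0).
Proof.
  intros Hab (_ & _ & Hsg & Hf & Hl) Hz.
  destruct (Hsg ((a + b) / 2) ltac:(lra)) as [P1 P2].
  destruct (Hf ((a + b) / 2) ltac:(lra)) as [F1 F2].
  assert (0 < (a + b) / 2 - a) by lra.
  set (k := coordf l 2 0 * s1 * s2) in *.
  destruct Hz as [Z|Z]; rewrite Z in *; [left | right]; (split; [reflexivity|]); split; nra.
Qed.

Lemma bang_arc_end_switch (g l : R -> R3) (lam0 a b s1 s2 : R) :
  a < b -> bang_arc g l lam0 a b s1 s2 -> phi1 l g b = 0 \/ phi2 l g b = 0 ->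
  (phi1 l g b = 0 /\ coordf l 2 0 * s1 * s2 > 0 /\ s2 * phi2 l g b = lam0) \/
  (phi2 l g b = 0 /\ coordf l 2 0 * s1 * s2 < 0 /\ s1 * phi1 l g b = lam0).
Proof.
  intros Hab (_ & _ & Hsg & Hf & Hl) Hz.
  destruct (Hsg ((a + b) / 2) ltac:(lra)) as [P1 P2].
  destruct (Hf ((a + b) / 2) ltac:(lra)) as [F1 F2]. destruct (Hf b ltac:(lra)) as [G1 G2].
  assert (0 < b - (a + b) / 2) by lra.
  set (k := coordf l 2 0 * s1 * s2) in *.
  destruct Hz as [Z|Z]; rewrite Z in *; [left | right]; (split; [reflexivity|]); split; nra.
Qed.

Lemma Rabs_mult_signs (c s1 s2 : R) : is_sign s1 -> is_sign s2 -> Rabs (c * s1 * s2) = Rabs c.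
Proof.
  intros [-> | ->] [-> | ->]; rewrite ?Rmult_1_r;
    try (rewrite <- Rabs_Ropp; f_equal; ring); f_equal; ring.
Qed.

(* Between two switches [s1 phi1] falls (or [s2 phi2] rises) from [lam0] to [0] at rate [|c|]. *)
Lemma bang_arc_interior_length (g l : R -> R3) (lam0 a b s1 s2 : R) :
  a < b -> bang_arc g l lam0 a b s1 s2 ->
  phi1 l g a = 0 \/ phi2 l g a = 0 -> phi1 l g b = 0 \/ phi2 l g b = 0 ->
  Rabs (coordf l 2 0) * (b - a) = lam0.
Proof.
  intros Hab HB Ha Hb. pose proof HB as (Hs1 & Hs2 & _ & Hf & _).
  destruct (Hf b ltac:(lra)) as [G1 G2].
  rewrite <- (Rabs_mult_signs _ s1 s2 Hs1 Hs2).
  destruct (bang_arc_start_switch g l lam0 a b s1 s2 Hab HB Ha) as [(A1&A2&A3)|(A1&A2&A3)];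
  destruct (bang_arc_end_switch g l lam0 a b s1 s2 Hab HB Hb) as [(B1&B2&B3)|(B1&B2&B3)];
    try lra.
  - rewrite Rabs_left by lra. rewrite A1, B1 in *. lra.
  - rewrite Rabs_right by lra. rewrite A1, B1 in *. lra.
Qed.

Lemma bang_arc_junction (g l : R -> R3) (lam0 a b b' s1 s2 r1 r2 : R) :
  a < b -> b < b' -> bang_arc g l lam0 a b s1 s2 -> bang_arc g l lam0 b b' r1 r2 ->
  phi1 l g b = 0 \/ phi2 l g b = 0 ->
  (r1 = - s1 /\ r2 = s2 /\ coordf l 2 0 * s1 * s2 > 0) \/
  (r1 = s1 /\ r2 = - s2 /\ coordf l 2 0 * s1 * s2 < 0).
Proof.
  intros Hab Hbb HB1 HB2 Hb.
  assert (Hl0 : 0 < lam0) by (eapply bang_arc_lam0_pos; eauto).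
  pose proof HB1 as (Hs1 & Hs2 & _). pose proof HB2 as (Hr1 & Hr2 & _).
  destruct (bang_arc_end_switch g l lam0 a b s1 s2 Hab HB1 Hb) as [(A1&A2&A3)|(A1&A2&A3)];
  destruct (bang_arc_start_switch g l lam0 b b' r1 r2 Hbb HB2 Hb) as [(B1&B2&B3)|(B1&B2&B3)];
    rewrite ?A1, ?B1 in *; try lra;
  [left | right]; destruct Hs1 as [-> | ->]; destruct Hs2 as [-> | ->];
    destruct Hr1 as [-> | ->]; destruct Hr2 as [-> | ->]; repeat split; lra.
Qed.

Lemma max_regular_arcs_overlap (l g : R -> R3) (T a b a' b' t : R) :
  max_regular_arc l g T a b -> max_regular_arc l g T a' b' ->
  a < t < b -> a' < t < b' -> a = a' /\ b = b'.
Proof.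
  intros (Ha & Hab & Hb & Hreg & Hmax) (Ha' & Hab' & Hb' & Hreg' & Hmax') Ht Ht'.
  pose proof (Rmin_l a a'); pose proof (Rmin_r a a').
  pose proof (Rmax_l b b'); pose proof (Rmax_r b b').
  assert (HminE : Rmin a a' = a \/ Rmin a a' = a')
    by (unfold Rmin; destruct (Rle_dec a a'); auto).
  assert (HmaxE : Rmax b b' = b \/ Rmax b b' = b')
    by (unfold Rmax; destruct (Rle_dec b b'); auto).
  assert (Hr : regular_on l g (Rmin a a') (Rmax b b')).
  { intros s Hs. destruct (Rlt_dec a s); destruct (Rlt_dec s b);
      [apply Hreg | apply Hreg' | apply Hreg' | idtac]; destruct HminE, HmaxE; lra. }
  pose proof (Rmin_glb a a' 0 Ha Ha'); pose proof (Rmax_lub b b' T Hb Hb').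
  destruct (Hmax (Rmin a a') (Rmax b b') ltac:(lra) ltac:(lra) ltac:(lra) ltac:(lra) Hr).
  destruct (Hmax' (Rmin a a') (Rmax b b') ltac:(lra) ltac:(lra) ltac:(lra) ltac:(lra) Hr).
  lra.
Qed.

Lemma avoid_finite (F : list R) (x y : R) : x < y -> exists t, x < t < y /\ ~ In t F.
Proof.
  revert x y; induction F as [|f F IH]; intros x y Hxy.
  - exists ((x + y) / 2). split; [lra | simpl; tauto].
  - destruct (Rlt_dec x f) as [H1|H1]; [destruct (Rlt_dec f y) as [H2|H2]|];
      [destruct (IH x f H1) as [t [Ht Hn]] | destruct (IH x y Hxy) as [t [Ht Hn]]
      | destruct (IH x y Hxy) as [t [Ht Hn]]];
      exists t; (split; [lra|]); simpl; intros [E|E]; lra || tauto.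
Qed.

Definition arcs_cover (l g : R -> R3) (T : R) (arcs : list (R * R)) (F : list R) : Prop :=
  (forall ab, In ab arcs -> max_regular_arc l g T (fst ab) (snd ab)) /\
  (forall t, 0 <= t <= T -> ~ In t F -> exists ab, In ab arcs /\ fst ab < t < snd ab).

Lemma junction_sign_pattern (c a1 a2 b1 b2 d1 d2 f1 f2 h1 h2 : R) :
  is_sign a1 -> is_sign a2 ->
  (b1 = - a1 /\ b2 = a2 /\ c * a1 * a2 > 0) \/ (b1 = a1 /\ b2 = - a2 /\ c * a1 * a2 < 0) ->
  (d1 = - b1 /\ d2 = b2 /\ c * b1 * b2 > 0) \/ (d1 = b1 /\ d2 = - b2 /\ c * b1 * b2 < 0) ->
  (f1 = - d1 /\ f2 = d2 /\ c * d1 * d2 > 0) \/ (f1 = d1 /\ f2 = - d2 /\ c * d1 * d2 < 0) ->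
  (h1 = - f1 /\ h2 = f2 /\ c * f1 * f2 > 0) \/ (h1 = f1 /\ h2 = - f2 /\ c * f1 * f2 < 0) ->
  ((b1 = - a1 /\ b2 = a2) \/ (b1 = a1 /\ b2 = - a2)) /\
  d1 = - a1 /\ d2 = - a2 /\ f1 = - b1 /\ f2 = - b2 /\ h1 = a1 /\ h2 = a2.
Proof.
  intros Ha1 Ha2 J1 J2 J3 J4.
  destruct J1 as [(->&->&K1)|(->&->&K1)]; destruct J2 as [(->&->&K2)|(->&->&K2)];
  destruct J3 as [(->&->&K3)|(->&->&K3)]; destruct J4 as [(->&->&K4)|(->&->&K4)];
    try (exfalso; nra); repeat split; try lra.
Qed.

Section ExtremalArcs.

Variables (g l : R -> R3) (u : R -> R * R) (lam0 T : R) (N : R -> Prop).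
Hypothesis Hext : extremal_data g l u lam0 T N.

Lemma state_increment (k : nat) (p q m : R) : (k < 3)%nat -> 0 <= p -> p <= q -> q <= T ->
  (forall t, p < t < q -> extremal_at g l u lam0 t -> derivable_pt_lim (coordf g k) t m) ->
  coordf g k q = coordf g k p + m * (q - p).
Proof.
  intros Hk Hp Hpq Hq Hd. destruct Hext as (Hacg & _ & HN & HE).
  apply (abs_cont3_increment g k T p q m N); auto.
  intros t Ht HNt. apply Hd; auto. apply HE; auto; lra.
Qed.

Lemma costate_increment (k : nat) (p q m : R) : (k < 3)%nat -> 0 <= p -> p <= q -> q <= T ->
  (forall t, p < t < q -> extremal_at g l u lam0 t -> derivable_pt_lim (coordf l k) t m) ->
  coordf l k q = coordf l k p + m * (q - p).
Proof.
  intros Hk Hp Hpq Hq Hd. destruct Hext as (_ & Hacl & HN & HE).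
  apply (abs_cont3_increment l k T p q m N); auto.
  intros t Ht HNt. apply Hd; auto. apply HE; auto; lra.
Qed.

Lemma costate_z_const (t : R) : 0 <= t <= T -> coordf l 2 t = coordf l 2 0.
Proof.
  intros Ht. rewrite (costate_increment 2 0 t 0 ltac:(lia) ltac:(lra) ltac:(lra) ltac:(lra)).
  - ring.
  - intros s _ (_ & Hl & _). exact (Hl 2%nat ltac:(lia)).
Qed.

Lemma phi2_signed_affine (p q s2 : R) : 0 <= p -> p <= q -> q <= T -> is_sign s2 ->
  (forall t, p < t < q -> s2 * phi2 l g t > 0) ->
  forall t, p <= t <= q ->
    coordf g 1 t = coordf g 1 p + s2 * (t - p) /\
    coordf l 0 t = coordf l 0 p - coordf l 2 0 * s2 * (t - p) / 2.
Proof.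
  intros Hp Hpq Hq Hs Hph t Ht. split.
  - apply state_increment; try (lia || lra).
    intros s Hst HE. rewrite <- (control_snd_sign _ _ _ _ _ _ HE Hs (Hph s ltac:(lra))).
    pose proof (proj1 HE 1%nat ltac:(lia)) as D. rewrite coord_combo in D. exact D.
  - rewrite (costate_increment 0 p t (- (coordf l 2 0 * s2) / 2)
               ltac:(lia) Hp ltac:(lra) ltac:(lra)); [field|].
    intros s Hst HE. pose proof (proj1 (proj2 HE) 0%nat ltac:(lia)) as D.
    unfold costate_rate in D. change (c2 (l s)) with (coordf l 2 s) in D.
    rewrite (control_snd_sign _ _ _ _ _ _ HE Hs (Hph s ltac:(lra))) in D.
    rewrite costate_z_const in D by lra.
    replace (- (coordf l 2 0 * s2) / 2) with (- s2 * coordf l 2 0 / 2) by field.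
    exact D.
Qed.

Lemma phi1_signed_affine (p q s1 : R) : 0 <= p -> p <= q -> q <= T -> is_sign s1 ->
  (forall t, p < t < q -> s1 * phi1 l g t > 0) ->
  forall t, p <= t <= q ->
    coordf g 0 t = coordf g 0 p + s1 * (t - p) /\
    coordf l 1 t = coordf l 1 p + coordf l 2 0 * s1 * (t - p) / 2.
Proof.
  intros Hp Hpq Hq Hs Hph t Ht. split.
  - apply state_increment; try (lia || lra).
    intros s Hst HE. rewrite <- (control_fst_sign _ _ _ _ _ _ HE Hs (Hph s ltac:(lra))).
    pose proof (proj1 HE 0%nat ltac:(lia)) as D. rewrite coord_combo in D. exact D.
  - rewrite (costate_increment 1 p t (coordf l 2 0 * s1 / 2)
               ltac:(lia) Hp ltac:(lra) ltac:(lra)); [field|].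
    intros s Hst HE. pose proof (proj1 (proj2 HE) 1%nat ltac:(lia)) as D.
    unfold costate_rate in D. change (c2 (l s)) with (coordf l 2 s) in D.
    rewrite (control_fst_sign _ _ _ _ _ _ HE Hs (Hph s ltac:(lra))) in D.
    rewrite costate_z_const in D by lra.
    replace (coordf l 2 0 * s1 / 2) with (s1 * coordf l 2 0 / 2) by field.
    exact D.
Qed.

Lemma phi1_on_phi2_signed (p q s2 : R) : 0 <= p -> p <= q -> q <= T -> is_sign s2 ->
  (forall t, p < t < q -> s2 * phi2 l g t > 0) ->
  forall t, p <= t <= q -> phi1 l g t = phi1 l g p - coordf l 2 0 * s2 * (t - p).
Proof.
  intros Hp Hpq Hq Hs Hph t Ht.
  destruct (phi2_signed_affine p q s2 Hp Hpq Hq Hs Hph t Ht) as [A B].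
  rewrite !phi1_eq, A, B, (costate_z_const t), (costate_z_const p) by lra. field.
Qed.

Lemma phi2_on_phi1_signed (p q s1 : R) : 0 <= p -> p <= q -> q <= T -> is_sign s1 ->
  (forall t, p < t < q -> s1 * phi1 l g t > 0) ->
  forall t, p <= t <= q -> phi2 l g t = phi2 l g p + coordf l 2 0 * s1 * (t - p).
Proof.
  intros Hp Hpq Hq Hs Hph t Ht.
  destruct (phi1_signed_affine p q s1 Hp Hpq Hq Hs Hph t Ht) as [A B].
  rewrite !phi2_eq, A, B, (costate_z_const t), (costate_z_const p) by lra. field.
Qed.

Lemma flow_on_signed_phis (p q s1 s2 : R) : 0 <= p -> p <= q -> q <= T ->
  is_sign s1 -> is_sign s2 ->
  (forall t, p < t < q -> s1 * phi1 l g t > 0 /\ s2 * phi2 l g t > 0) ->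
  g q = flow (g p) (s1, s2) (q - p).
Proof.
  intros Hp Hpq Hq Hs1 Hs2 Hph.
  assert (Hx := fun t Ht => proj1 (phi1_signed_affine p q s1 Hp Hpq Hq Hs1
                                      (fun t Ht => proj1 (Hph t Ht)) t Ht)).
  assert (Hy := fun t Ht => proj1 (phi2_signed_affine p q s2 Hp Hpq Hq Hs2
                                      (fun t Ht => proj2 (Hph t Ht)) t Ht)).
  assert (Hz : coordf g 2 q = coordf g 2 p + velocity (g p) (s1, s2) 2 * (q - p)).
  { apply state_increment; try (lia || lra).
    intros s Hs HE. pose proof (proj1 HE 2%nat ltac:(lia)) as D.
    rewrite coord_combo in D. unfold velocity in D |- *; simpl.
    rewrite (control_fst_sign _ _ _ _ _ _ HE Hs1 (proj1 (Hph s Hs))),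
      (control_snd_sign _ _ _ _ _ _ HE Hs2 (proj2 (Hph s Hs))) in D.
    change (Defs.c1 (g s)) with (coordf g 1 s) in D. change (c0 (g s)) with (coordf g 0 s) in D.
    rewrite (Hx s), (Hy s) in D by lra. unfold coordf in D.
    replace ((- s1 * Defs.c1 (g p) + s2 * c0 (g p)) / 2)
      with ((- s1 * (Defs.c1 (g p) + s2 * (s - p)) + s2 * (c0 (g p) + s1 * (s - p))) / 2) ; [|field].
    exact D. }
  apply R3_ext; unfold flow; simpl.
  - exact (Hx q ltac:(lra)).
  - exact (Hy q ltac:(lra)).
  - exact Hz.
Qed.

Lemma continuity_pt_coordf (h : R -> R3) (k : nat) (t : R) :
  abs_cont3 h 0 T -> (k < 3)%nat -> 0 < t < T -> continuity_pt (coordf h k) t.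
Proof. intros Hac Hk Ht. exact (abs_cont_continuity_pt _ 0 T t (Hac k Hk) Ht). Qed.

Lemma continuity_pt_phi1 (t : R) : 0 < t < T -> continuity_pt (phi1 l g) t.
Proof.
  intros Ht. destruct Hext as (Hacg & Hacl & _).
  apply (continuity_pt_locally_ext (coordf l 0 - coordf l 2 * coordf g 1 * fct_cte (/ 2))%F
           _ 1 t Rlt_0_1).
  - intros y _. rewrite phi1_eq. unfold minus_fct, mult_fct, fct_cte. field.
  - apply continuity_pt_minus; [|apply continuity_pt_mult; [apply continuity_pt_mult|]];
      try (apply continuity_pt_coordf; auto; lia).
    apply continuity_pt_const. intros ? ?; reflexivity.
Qed.

Lemma continuity_pt_phi2 (t : R) : 0 < t < T -> continuity_pt (phi2 l g) t.
Proof.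
  intros Ht. destruct Hext as (Hacg & Hacl & _).
  apply (continuity_pt_locally_ext (coordf l 1 + coordf l 2 * coordf g 0 * fct_cte (/ 2))%F
           _ 1 t Rlt_0_1).
  - intros y _. rewrite phi2_eq. unfold plus_fct, mult_fct, fct_cte. field.
  - apply continuity_pt_plus; [|apply continuity_pt_mult; [apply continuity_pt_mult|]];
      try (apply continuity_pt_coordf; auto; lia).
    apply continuity_pt_const. intros ? ?; reflexivity.
Qed.

Lemma regular_near (t : R) : 0 < t < T -> phi1 l g t <> 0 -> phi2 l g t <> 0 ->
  exists d, 0 < d /\ d <= t /\ d <= T - t /\ regular_on l g (t - d) (t + d).
Proof.
  intros Ht H1 H2.
  destruct (continuous_neq_0 _ _ (continuity_pt_phi1 t Ht) H1) as [e1 He1].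
  destruct (continuous_neq_0 _ _ (continuity_pt_phi2 t Ht) H2) as [e2 He2].
  set (d := Rmin (Rmin e1 e2) (Rmin t (T - t))).
  pose proof (Rmin_l (Rmin e1 e2) (Rmin t (T - t))); pose proof (Rmin_r (Rmin e1 e2) (Rmin t (T - t))).
  pose proof (Rmin_l e1 e2); pose proof (Rmin_r e1 e2).
  pose proof (Rmin_l t (T - t)); pose proof (Rmin_r t (T - t)).
  pose proof (cond_pos e1); pose proof (cond_pos e2).
  exists d. fold d in H, H0.
  split; [unfold d; repeat apply Rmin_pos; lra|]. split; [lra|]. split; [lra|].
  intros s Hs. replace s with (t + (s - t)) by ring.
  split; [apply He1 | apply He2]; apply Rabs_def1; lra.
Qed.

Lemma max_regular_arc_bang (a b : R) : max_regular_arc l g T a b ->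
  exists s1 s2, bang_arc g l lam0 a b s1 s2.
Proof.
  intros (Ha & Hab & Hb & Hreg & _).
  destruct (continuous_nonzero_sign (phi1 l g) a b Hab) as [s1 [Hs1 Hsg1]].
  { intros z Hz. split; [apply continuity_pt_phi1; lra | apply (Hreg z Hz)]. }
  destruct (continuous_nonzero_sign (phi2 l g) a b Hab) as [s2 [Hs2 Hsg2]].
  { intros z Hz. split; [apply continuity_pt_phi2; lra | apply (Hreg z Hz)]. }
  assert (Haff : forall t, a <= t <= b ->
    s1 * phi1 l g t = s1 * phi1 l g a - coordf l 2 0 * s1 * s2 * (t - a) /\
    s2 * phi2 l g t = s2 * phi2 l g a + coordf l 2 0 * s1 * s2 * (t - a)).
  { intros t Ht.
    rewrite (phi1_on_phi2_signed a b s2 Ha ltac:(lra) Hb Hs2 Hsg2 t Ht).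
    rewrite (phi2_on_phi1_signed a b s1 Ha ltac:(lra) Hb Hs1 Hsg1 t Ht).
    split; ring. }
  exists s1, s2. split; [exact Hs1|]. split; [exact Hs2|].
  split; [intros t Ht; split; auto|]. split; [exact Haff|].
  destruct Hext as (_ & _ & HN & HE).
  destruct (null_set_complement_meets N a b HN Hab) as [t0 [Ht0 HNt0]].
  destruct (HE t0 ltac:(lra) HNt0) as (_ & _ & _ & _ & _ & Hl).
  rewrite (is_sign_abs s1 _ Hs1 (Hsg1 t0 Ht0)), (is_sign_abs s2 _ Hs2 (Hsg2 t0 Ht0)) in Hl.
  destruct (Haff t0 ltac:(lra)) as [F1 F2]. lra.
Qed.

Lemma max_regular_arc_switch_start (a b : R) : max_regular_arc l g T a b -> 0 < a ->
  phi1 l g a = 0 \/ phi2 l g a = 0.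
Proof.
  intros (Ha & Hab & Hb & Hreg & Hmax) Ha0. apply NNPP; intros Hn.
  destruct (regular_near a ltac:(lra) ltac:(tauto) ltac:(tauto)) as (d & Hd & Hda & HdT & Hr).
  destruct (Hmax (a - d) b ltac:(lra) Hb ltac:(lra) ltac:(lra)) as [E _]; [|lra].
  intros s Hs. destruct (Rlt_dec s (a + d)); [apply Hr | apply Hreg]; lra.
Qed.

Lemma regular_left_of_start (a b s1 s2 : R) : max_regular_arc l g T a b -> 0 < a ->
  bang_arc g l lam0 a b s1 s2 -> exists d, 0 < d /\ d <= a /\ regular_on l g (a - d) a.
Proof.
  intros HM Ha0 HB. pose proof HM as (Ha & Hab & Hb & _).
  assert (Hl0 : 0 < lam0) by (eapply bang_arc_lam0_pos; eauto).
  pose proof HB as (Hs1 & Hs2 & _).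
  destruct (bang_arc_start_switch g l lam0 a b s1 s2 Hab HB
              (max_regular_arc_switch_start a b HM Ha0)) as [(A1&A2&A3)|(A1&A2&A3)].
  - destruct (continuity_pt_pos_near (fun v => s2 * phi2 l g v) a
                (continuity_pt_scal _ _ _ (continuity_pt_phi2 a ltac:(lra))) ltac:(lra))
      as [d [Hd Hpos]].
    pose proof (Rmin_l (d / 2) a); pose proof (Rmin_r (d / 2) a).
    assert (Hd' : 0 < Rmin (d / 2) a) by (apply Rmin_pos; lra).
    set (d' := Rmin (d / 2) a) in *.
    assert (Hsg : forall t, a - d' < t < a -> s2 * phi2 l g t > 0)
      by (intros t Ht; apply Hpos, Rabs_def1; lra).
    pose proof (phi1_on_phi2_signed (a - d') a s2 ltac:(lra) ltac:(lra) ltac:(lra) Hs2 Hsg) as HL.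
    assert (Hc : coordf l 2 0 * s2 <> 0) by (destruct Hs1 as [-> | ->]; nra).
    exists d'. split; [lra | split; [lra|]]. intros t Ht. split.
    + pose proof (HL a ltac:(lra)). rewrite (HL t) by lra. intros E.
      apply Hc, (Rmult_eq_reg_r (a - t)); lra.
    + intros E. specialize (Hsg t Ht). rewrite E in Hsg. lra.
  - destruct (continuity_pt_pos_near (fun v => s1 * phi1 l g v) a
                (continuity_pt_scal _ _ _ (continuity_pt_phi1 a ltac:(lra))) ltac:(lra))
      as [d [Hd Hpos]].
    pose proof (Rmin_l (d / 2) a); pose proof (Rmin_r (d / 2) a).
    assert (Hd' : 0 < Rmin (d / 2) a) by (apply Rmin_pos; lra).
    set (d' := Rmin (d / 2) a) in *.
    assert (Hsg : forall t, a - d' < t < a -> s1 * phi1 l g t > 0)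
      by (intros t Ht; apply Hpos, Rabs_def1; lra).
    pose proof (phi2_on_phi1_signed (a - d') a s1 ltac:(lra) ltac:(lra) ltac:(lra) Hs1 Hsg) as HL.
    assert (Hc : coordf l 2 0 * s1 <> 0) by (destruct Hs2 as [-> | ->]; nra).
    exists d'. split; [lra | split; [lra|]]. intros t Ht. split.
    + intros E. specialize (Hsg t Ht). rewrite E in Hsg. lra.
    + pose proof (HL a ltac:(lra)). rewrite (HL t) by lra. intros E.
      apply Hc, (Rmult_eq_reg_r (a - t)); lra.
Qed.

Lemma arcs_cover_predecessor (arcs : list (R * R)) (F : list R) :
  arcs_cover l g T arcs F -> forall a b, In (a, b) arcs -> 0 < a -> exists a', In (a', a) arcs.
Proof.
  intros [Harcs Hcov] a b Hin Ha0.
  pose proof (Harcs _ Hin) as HM. simpl in HM. pose proof HM as (Ha & Hab & Hb & Hreg & Hmax).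
  destruct (max_regular_arc_bang a b HM) as [s1 [s2 HB]].
  destruct (regular_left_of_start a b s1 s2 HM Ha0 HB) as [d [Hd [Hda HR]]].
  destruct (avoid_finite F (a - d) a ltac:(lra)) as [t [Ht Hn]].
  destruct (Hcov t ltac:(lra) Hn) as [[a'' b''] [Hin'' Ht'']]. simpl in Ht''.
  pose proof (Harcs _ Hin'') as HM''. simpl in HM''.
  pose proof HM'' as (Ha'' & Hab'' & Hb'' & Hreg'' & Hmax'').
  exists a''. destruct (Rtotal_order b'' a) as [Hlt|[<-|Hgt]]; [exfalso | exact Hin'' | exfalso].
  - destruct (Hmax'' a'' a ltac:(lra) ltac:(lra) ltac:(lra) ltac:(lra)) as [_ E]; [|lra].
    intros s Hs. destruct (Rlt_dec s b''); [apply Hreg'' | apply HR]; lra.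
  - pose proof (Rmin_l b b''); pose proof (Rmin_r b b'').
    assert (a < Rmin b b'') by (apply Rmin_glb_lt; lra).
    destruct (max_regular_arcs_overlap l g T a b a'' b'' ((a + Rmin b b'') / 2) HM HM'');
      lra.
Qed.

Lemma max_regular_arc_flow (a b : R) : max_regular_arc l g T a b ->
  exists s1 s2, bang_arc g l lam0 a b s1 s2 /\ g b = flow (g a) (s1, s2) (b - a).
Proof.
  intros HM. pose proof HM as (Ha & Hab & Hb & _).
  destruct (max_regular_arc_bang a b HM) as [s1 [s2 HB]].
  pose proof HB as (Hs1 & Hs2 & Hsg & _).
  exists s1, s2. split; auto. apply flow_on_signed_phis; auto; lra.
Qed.

(* Four consecutive interior arcs all last [lam0 / |c|] and switch the controls as
   [a, b, -a, -b, a]. *)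
Lemma five_arcs_shape (e1 e2 e3 e4 e5 : R) : 0 < e1 ->
  max_regular_arc l g T e1 e2 -> max_regular_arc l g T e2 e3 -> max_regular_arc l g T e3 e4 ->
  max_regular_arc l g T e4 e5 -> max_regular_arc l g T e5 T ->
  exists a1 a2 b1 b2 tau, is_sign a1 /\ is_sign a2 /\
    ((b1 = - a1 /\ b2 = a2) \/ (b1 = a1 /\ b2 = - a2)) /\ 0 < tau /\ e1 + 4 * tau < T /\
    g T = flow (flow (flow (flow (flow (g e1) (a1, a2) tau) (b1, b2) tau)
                           (- a1, - a2) tau) (- b1, - b2) tau) (a1, a2) (T - e1 - 4 * tau).
Proof.
  intros He1 M1 M2 M3 M4 M5.
  pose proof M1 as (_ & L1 & _). pose proof M2 as (_ & L2 & _). pose proof M3 as (_ & L3 & _).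
  pose proof M4 as (_ & L4 & _). pose proof M5 as (_ & L5 & _).
  destruct (max_regular_arc_flow e1 e2 M1) as (a1 & a2 & B1 & G1).
  destruct (max_regular_arc_flow e2 e3 M2) as (b1 & b2 & B2 & G2).
  destruct (max_regular_arc_flow e3 e4 M3) as (d1 & d2 & B3 & G3).
  destruct (max_regular_arc_flow e4 e5 M4) as (f1 & f2 & B4 & G4).
  destruct (max_regular_arc_flow e5 T M5) as (h1 & h2 & B5 & G5).
  pose proof (max_regular_arc_switch_start _ _ M1 He1) as Z1.
  pose proof (max_regular_arc_switch_start _ _ M2 ltac:(lra)) as Z2.
  pose proof (max_regular_arc_switch_start _ _ M3 ltac:(lra)) as Z3.
  pose proof (max_regular_arc_switch_start _ _ M4 ltac:(lra)) as Z4.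
  pose proof (max_regular_arc_switch_start _ _ M5 ltac:(lra)) as Z5.
  pose proof (bang_arc_interior_length g l lam0 _ _ _ _ L1 B1 Z1 Z2) as E1.
  pose proof (bang_arc_interior_length g l lam0 _ _ _ _ L2 B2 Z2 Z3) as E2.
  pose proof (bang_arc_interior_length g l lam0 _ _ _ _ L3 B3 Z3 Z4) as E3.
  pose proof (bang_arc_interior_length g l lam0 _ _ _ _ L4 B4 Z4 Z5) as E4.
  pose proof (bang_arc_lam0_pos g l lam0 _ _ _ _ L1 B1).
  assert (Hc : 0 < Rabs (coordf l 2 0)) by (pose proof (Rabs_pos (coordf l 2 0)); nra).
  set (tau := e2 - e1).
  assert (T1 : e2 - e1 = tau) by reflexivity.
  assert (e3 - e2 = tau /\ e4 - e3 = tau /\ e5 - e4 = tau) as (T2 & T3 & T4)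
    by (unfold tau; repeat split; apply (Rmult_eq_reg_l (Rabs (coordf l 2 0))); lra).
  pose proof B1 as (Ha1 & Ha2 & _).
  destruct (junction_sign_pattern (coordf l 2 0) a1 a2 b1 b2 d1 d2 f1 f2 h1 h2 Ha1 Ha2
    (bang_arc_junction g l lam0 _ _ _ _ _ _ _ L1 L2 B1 B2 Z2)
    (bang_arc_junction g l lam0 _ _ _ _ _ _ _ L2 L3 B2 B3 Z3)
    (bang_arc_junction g l lam0 _ _ _ _ _ _ _ L3 L4 B3 B4 Z4)
    (bang_arc_junction g l lam0 _ _ _ _ _ _ _ L4 L5 B4 B5 Z5))
    as (Hb & -> & -> & -> & -> & -> & ->).
  exists a1, a2, b1, b2, tau. repeat split; auto; try lra.
  rewrite G5, G4, G3, G2, G1, T1, T2, T3, T4.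
  replace (T - e1 - 4 * tau) with (T - e5) by lra. reflexivity.
Qed.

End ExtremalArcs.

Fixpoint tiling (T x : R) (Ch : list (R * R)) : Prop :=
  match Ch with
  | nil => x = T
  | (a, b) :: r => a = x /\ tiling T b r
  end.

Lemma tiling_cover (T x : R) (Ch : list (R * R)) : tiling T x Ch ->
  (forall ab, In ab Ch -> fst ab < snd ab) ->
  forall t, x < t < T -> ~ In t (map snd Ch) -> exists ab, In ab Ch /\ fst ab < t < snd ab.
Proof.
  revert x; induction Ch as [|[a b] Ch IH]; simpl; intros x Ht Hpos t Hxt Hn; [lra|].
  destruct Ht as [-> Ht]. destruct (Rtotal_order t b) as [H|[H|H]].
  - exists (x, b). split; [left; auto | simpl; lra].
  - exfalso; apply Hn; left; auto.
  - destruct (IH b Ht (fun ab H => Hpos ab (or_intror H)) t ltac:(lra)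
                 (fun H => Hn (or_intror H))) as [ab [H1 H2]].
    exists ab; auto.
Qed.

Lemma arcs_cover_length_le_tiling (l g : R -> R3) (T : R) (arcs : list (R * R)) (F : list R)
    (Ch : list (R * R)) :
  arcs_cover l g T arcs F -> NoDup arcs -> tiling T 0 Ch -> incl Ch arcs ->
  (length arcs <= length Ch)%nat.
Proof.
  intros [Harcs Hcov] Hnd Ht Hinc. apply NoDup_incl_length; auto.
  intros [a b] Hin. pose proof (Harcs _ Hin) as HM. pose proof HM as (Ha & Hab & Hb & _).
  simpl in *. destruct (avoid_finite (map snd Ch) a b Hab) as [t [Hta Hn]].
  destruct (tiling_cover T 0 Ch Ht (fun ab H => proj1 (proj2 (Harcs ab (Hinc ab H))))
              t ltac:(lra) Hn) as [[a' b'] [H1 H2]].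
  simpl in H2. pose proof (Harcs _ (Hinc _ H1)) as HM'.
  destruct (max_regular_arcs_overlap l g T a b a' b' t HM HM' ltac:(lra) H2) as [-> ->]. auto.
Qed.

Lemma arcs_cover_last (l g : R -> R3) (T : R) (arcs : list (R * R)) (F : list R) :
  arcs_cover l g T arcs F -> arcs <> nil -> exists a, In (a, T) arcs.
Proof.
  intros [Harcs Hcov] Hne.
  assert (Hmax : exists ab, In ab arcs /\ forall cd, In cd arcs -> snd cd <= snd ab).
  { clear -Hne. induction arcs as [|x L IH]; [congruence|].
    destruct L as [|y L'].
    - exists x. split; [left; auto|]. intros cd [<-|[]]; lra.
    - destruct IH as [ab [Hin Hmax]]; [congruence|].
      destruct (Rle_dec (snd x) (snd ab)).
      + exists ab. split; [right; auto|]. intros cd [<-|H]; auto.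
      + exists x. split; [left; auto|]. intros cd [<-|H]; [lra|]. specialize (Hmax cd H); lra. }
  destruct Hmax as [[a b] [Hin Hmax]].
  pose proof (Harcs _ Hin) as (Ha & Hab & Hb & _). simpl in *.
  destruct (Req_dec b T) as [->|HbT]; [eauto|].
  destruct (avoid_finite F b T ltac:(lra)) as [t [Ht Hn]].
  destruct (Hcov t ltac:(lra) Hn) as [cd [Hcd Ht']]. specialize (Hmax cd Hcd). lra.
Qed.

Section BackwardTiling.

Variables (l g : R -> R3) (T : R) (arcs : list (R * R)) (F : list R).
Hypothesis Hcover : arcs_cover l g T arcs F.
Hypothesis Hpred : forall a b, In (a, b) arcs -> 0 < a -> exists a', In (a', a) arcs.

Lemma arcs_backward_tiling (k : nat) : arcs <> nil ->
  (exists Ch, tiling T 0 Ch /\ incl Ch arcs /\ (length Ch <= S k)%nat) \/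
  (exists e Ch, 0 < e /\ tiling T e Ch /\ incl Ch arcs /\ length Ch = S k).
Proof.
  intros Hne. induction k as [|k IH].
  - destruct (arcs_cover_last l g T arcs F Hcover Hne) as [e He].
    assert (Hi : incl ((e, T) :: nil) arcs) by (intros x [<-|[]]; exact He).
    pose proof (proj1 Hcover _ He) as (Hle & _). simpl in Hle.
    destruct Hle as [Hlt | Heq].
    + right. exists e, ((e, T) :: nil). simpl; auto.
    + left. exists ((e, T) :: nil). simpl; auto.
  - destruct IH as [[Ch [Ht [Hi Hl]]] | [e [Ch [He [Ht [Hi Hl]]]]]].
    + left. exists Ch. repeat split; auto.
    + destruct Ch as [|[a b] Ch]; [discriminate|]. destruct Ht as [-> Ht].
      destruct (Hpred e b (Hi _ (or_introl eq_refl)) He) as [a' Ha'].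
      assert (Hi' : incl ((a', e) :: (e, b) :: Ch) arcs)
        by (intros x [<-|Hx]; [exact Ha' | apply Hi; exact Hx]).
      pose proof (proj1 Hcover _ Ha') as (Hle & _). simpl in Hle, Hl.
      destruct Hle as [Hlt | Heq].
      * right. exists a', ((a', e) :: (e, b) :: Ch). simpl; auto.
      * left. exists ((a', e) :: (e, b) :: Ch). simpl. repeat split; auto; lia.
Qed.

Lemma arcs_five_final (n : nat) : NoDup arcs -> length arcs = n -> (5 < n)%nat ->
  exists e1 e2 e3 e4 e5, 0 < e1 /\ In (e1, e2) arcs /\ In (e2, e3) arcs /\ In (e3, e4) arcs /\
    In (e4, e5) arcs /\ In (e5, T) arcs.
Proof.
  intros Hnd Hlen Hn.
  assert (Hne : arcs <> nil) by (intros E; subst; simpl in Hn; lia).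
  destruct (arcs_backward_tiling 4 Hne) as [[Ch [Ht [Hi Hl]]] | [e [Ch [He [Ht [Hi Hl]]]]]].
  - pose proof (arcs_cover_length_le_tiling l g T arcs F Ch Hcover Hnd Ht Hi). lia.
  - destruct Ch as [|[e1 e2] [|[e2' e3] [|[e3' e4] [|[e4' e5] [|[e5' e6] [|]]]]]];
      try discriminate.
    simpl in Ht. destruct Ht as (-> & -> & -> & -> & -> & ->).
    exists e, e2, e3, e4, e5. repeat split; auto; apply Hi; simpl; tauto.
Qed.

End BackwardTiling.

Lemma coord_flow (P : R3) (w : R * R) (s : R) (k : nat) :
  coord k (flow P w s) = coord k P + velocity P w k * s.
Proof. destruct k as [|[|k]]; reflexivity. Qed.

Lemma flow_0 (P : R3) (w : R * R) : flow P w 0 = P.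
Proof. apply R3_ext; unfold flow, c0, Defs.c1, c2; simpl; ring. Qed.

Lemma velocity_flow (P : R3) (w : R * R) (s : R) (k : nat) :
  velocity (flow P w s) w k = velocity P w k.
Proof. destruct k as [|[|k]]; unfold velocity, flow, c0, Defs.c1; simpl; auto; field. Qed.

Lemma Rabs_half_comb_le (v1 v2 x y : R) : Rabs v1 <= 1 -> Rabs v2 <= 1 ->
  Rabs ((- v1 * y + v2 * x) / 2) <= (Rabs y + Rabs x) / 2.
Proof.
  intros H1 H2. unfold Rdiv. rewrite Rabs_mult, (Rabs_right (/ 2)) by lra.
  apply Rmult_le_compat_r; [lra|].
  eapply Rle_trans; [apply Rabs_triang|]. rewrite !Rabs_mult, Rabs_Ropp.
  pose proof (Rabs_pos x); pose proof (Rabs_pos y). nra.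
Qed.

Lemma admissible_restrict (g : R -> R3) (u : R -> R * R) (T a : R) :
  admissible g u T -> 0 <= a <= T -> admissible g u a.
Proof.
  intros (_ & Hac & [N1 [HN1 Hb]] & [N2 [HN2 Hd]]) Ha.
  split; [lra|]. split; [|split].
  - intros k Hk. apply (abs_cont_sub _ 0 T); auto; lra.
  - exists N1. split; auto. intros t Ht. apply Hb; lra.
  - exists N2. split; auto. intros t Ht. apply Hd; lra.
Qed.

(* The state moves at speed at most 1 in x and y, hence z moves at a bounded speed too. *)
Lemma admissible_lipschitz (g : R -> R3) (u : R -> R * R) (T : R) : admissible g u T ->
  exists K, 0 <= K /\ forall k, (k < 3)%nat -> lipschitz_on (coordf g k) 0 T K.
Proof.
  intros (HT & Hac & Hb & Hd). destruct (ae_on_and _ _ _ Hb Hd) as [N [HN HP]].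
  assert (Hlip : forall k K, (k < 3)%nat ->
    (forall t, 0 < t < T -> ~ N t -> Rabs (velocity (g t) (u t) k) <= K) ->
    lipschitz_on (coordf g k) 0 T K).
  { intros k K Hk HK x y Hx Hxy Hy.
    apply (ac_increment_abs _ x y K N Hxy (abs_cont_sub _ 0 T x y (Hac k Hk) Hx Hy) HN).
    intros t Ht HNt. exists (velocity (g t) (u t) k). split; [|apply HK; auto; lra].
    rewrite <- coord_combo. apply (proj2 (HP t ltac:(lra) HNt)); auto. }
  assert (Hxy : forall k, (k < 2)%nat -> lipschitz_on (coordf g k) 0 T 1).
  { intros k Hk. apply Hlip; [lia|]. intros t Ht HNt.
    destruct (proj1 (HP t ltac:(lra) HNt)) as [U1 U2].
    destruct k as [|[|k]]; simpl; auto; lia. }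
  set (Kz := (Rabs (coordf g 1 0) + Rabs (coordf g 0 0) + 2 * T) / 2).
  assert (Hz : lipschitz_on (coordf g 2) 0 T Kz).
  { apply Hlip; [lia|]. intros t Ht HNt.
    destruct (proj1 (HP t ltac:(lra) HNt)) as [U1 U2]. simpl.
    eapply Rle_trans; [apply Rabs_half_comb_le; auto|].
    pose proof (Hxy 0%nat ltac:(lia) 0 t ltac:(lra) ltac:(lra) ltac:(lra)).
    pose proof (Hxy 1%nat ltac:(lia) 0 t ltac:(lra) ltac:(lra) ltac:(lra)).
    pose proof (Rabs_triang_inv (coordf g 0 t) (coordf g 0 0)).
    pose proof (Rabs_triang_inv (coordf g 1 t) (coordf g 1 0)).
    unfold coordf, coord in *. unfold Kz, coordf, coord. lra. }
  assert (HKz : 0 <= Kz) by (unfold Kz; pose proof (Rabs_pos (coordf g 1 0));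
                                          pose proof (Rabs_pos (coordf g 0 0)); lra).
  exists (1 + Kz). split; [lra|]. intros k Hk.
  destruct (Nat.lt_ge_cases k 2) as [Hk2|Hk2].
  - apply (lipschitz_on_weaken _ 0 T 0 T 1); try lra. apply Hxy; auto.
  - replace k with 2%nat by lia. apply (lipschitz_on_weaken _ 0 T 0 T Kz); try lra; auto.
Qed.

Definition append_flow (g : R -> R3) (a : R) (w : R * R) (t : R) : R3 :=
  if Rle_dec t a then g t else flow (g a) w (t - a).

Definition append_control (u : R -> R * R) (a : R) (w : R * R) (t : R) : R * R :=
  if Rle_dec t a then u t else w.

Lemma append_flow_before (g : R -> R3) (a : R) (w : R * R) (t : R) :
  t <= a -> append_flow g a w t = g t.
Proof. intros Ht. unfold append_flow. destruct (Rle_dec t a); [reflexivity | lra]. Qed.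

Lemma append_flow_after (g : R -> R3) (a : R) (w : R * R) (t : R) :
  a <= t -> append_flow g a w t = flow (g a) w (t - a).
Proof.
  intros Ht. unfold append_flow. destruct (Rle_dec t a); [|reflexivity].
  replace t with a by lra. rewrite Rminus_diag, flow_0. reflexivity.
Qed.

Lemma admissible_append_flow (g : R -> R3) (u : R -> R * R) (a s : R) (w : R * R) :
  admissible g u a -> Rabs (fst w) <= 1 -> Rabs (snd w) <= 1 -> 0 <= s ->
  admissible (append_flow g a w) (append_control u a w) (a + s).
Proof.
  intros Hadm Hw1 Hw2 Hs.
  destruct (admissible_lipschitz g u a Hadm) as [K [HK HL]].
  destruct Hadm as (Ha & _ & [N1 [HN1 Hb]] & [N2 [HN2 Hd]]).
  split; [lra|]. split; [|split].
  - intros k Hk. set (v := velocity (g a) w k).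
    apply (lipschitz_abs_cont _ 0 (a + s) (K + Rabs v)); [pose proof (Rabs_pos v); lra|].
    apply (lipschitz_on_concat _ 0 a).
    + apply (lipschitz_on_ext _ (coordf g k)).
      * intros t Ht. unfold coordf. rewrite append_flow_before by lra. reflexivity.
      * apply (lipschitz_on_weaken _ 0 a 0 a K); auto; try lra. pose proof (Rabs_pos v); lra.
    + apply (lipschitz_on_ext _ (fun t => (coord k (g a) - v * a) + v * t)).
      * intros t Ht. rewrite append_flow_after, coord_flow by lra. fold v. ring.
      * apply (lipschitz_on_weaken _ a (a + s) a (a + s) (Rabs v)); try lra.
        apply lipschitz_on_affine.
  - exists N1. split; auto. intros t Ht HNt. unfold append_control.
    destruct (Rle_dec t a); [apply Hb; auto; lra | auto].
  - exists (fun t => N2 t \/ t = a). split; [apply null_set_union; auto using null_set_point|].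
    intros t Ht HNt k Hk. unfold append_control. destruct (Rle_dec t a) as [Hta|Hta].
    + assert (Hlt : t < a) by (destruct Hta; tauto).
      rewrite append_flow_before by lra.
      apply (derivable_pt_lim_locally_ext (fun s => coord k (g s)) _ t (t - 1) a); [lra| |].
      * intros z Hz. rewrite append_flow_before by lra. reflexivity.
      * apply Hd; auto; lra.
    + rewrite coord_combo, append_flow_after, velocity_flow by lra.
      apply (derivable_pt_lim_locally_ext (fun s => coord k (g a) + velocity (g a) w k * (s - a))
               _ t a (t + 1)); [lra| |].
      * intros z Hz. rewrite append_flow_after, coord_flow by lra. reflexivity.
      * apply (derivable_pt_lim_affine _ (coord k (g a) - velocity (g a) w k * a)).
        intros z; ring.
Qed.

Lemma flow_five_arcs_shortcut (P : R3) (a1 a2 b1 b2 tau s : R) : is_sign a1 -> is_sign a2 ->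
  ((b1 = - a1 /\ b2 = a2) \/ (b1 = a1 /\ b2 = - a2)) -> 0 < tau -> 0 < s ->
  flow (flow (flow (flow P (- a1, - a2) tau) (- b1, - b2) (tau * tau / (s + tau)))
             (a1, a2) (s + tau)) (b1, b2) (tau * tau / (s + tau)) =
  flow (flow (flow (flow (flow P (a1, a2) tau) (b1, b2) tau) (- a1, - a2) tau)
             (- b1, - b2) tau) (a1, a2) s.
Proof.
  intros Ha1 Ha2 Hb Ht Hs. destruct P as [[x y] z].
  apply R3_ext; unfold flow, velocity, c0, Defs.c1, c2; simpl;
    destruct Ha1 as [-> | ->]; destruct Ha2 as [-> | ->]; destruct Hb as [[-> ->]|[-> ->]];
    field; lra.
Qed.

Lemma is_sign_bound (s : R) : is_sign s -> Rabs s <= 1 /\ Rabs (- s) <= 1.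
Proof. intros [-> | ->]; rewrite Rabs_Ropp; split; unfold Rabs; destruct Rcase_abs; lra. Qed.

(* Durations [tau, r, s + tau, r] with [r = tau^2 / (s + tau) < tau] replace [tau, tau, tau, tau, s]. *)
Lemma five_arcs_not_time_minimizer (g : R -> R3) (u : R -> R * R) (T e1 tau : R)
    (a1 a2 b1 b2 : R) :
  admissible g u T -> 0 < e1 -> 0 < tau -> e1 + 4 * tau < T ->
  is_sign a1 -> is_sign a2 -> ((b1 = - a1 /\ b2 = a2) \/ (b1 = a1 /\ b2 = - a2)) ->
  g T = flow (flow (flow (flow (flow (g e1) (a1, a2) tau) (b1, b2) tau)
                         (- a1, - a2) tau) (- b1, - b2) tau) (a1, a2) (T - e1 - 4 * tau) ->
  ~ time_minimizer g T.
Proof.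
  intros Hadm He1 Htau HT Ha1 Ha2 Hb Hg.
  set (s := T - e1 - 4 * tau) in Hg.
  set (r := tau * tau / (s + tau)).
  assert (Hr : 0 < r < tau).
  { unfold r. split; [apply Rdiv_lt_0_compat; unfold s; nra|].
    apply Rmult_lt_reg_r with (s + tau); [unfold s; lra|].
    replace (tau * tau / (s + tau) * (s + tau)) with (tau * tau) by (field; unfold s; lra).
    unfold s; nra. }
  assert (Hb' : is_sign b1 /\ is_sign b2)
    by (destruct Hb as [[-> ->]|[-> ->]]; split; auto; destruct Ha1, Ha2; subst;
        unfold is_sign; lra).
  destruct Hb' as [Hb1 Hb2].
  pose proof (is_sign_bound a1 Ha1); pose proof (is_sign_bound a2 Ha2).
  pose proof (is_sign_bound b1 Hb1); pose proof (is_sign_bound b2 Hb2).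
  set (g1 := append_flow g e1 (- a1, - a2)). set (u1 := append_control u e1 (- a1, - a2)).
  set (g2 := append_flow g1 (e1 + tau) (- b1, - b2)).
  set (u2 := append_control u1 (e1 + tau) (- b1, - b2)).
  set (g3 := append_flow g2 (e1 + tau + r) (a1, a2)).
  set (u3 := append_control u2 (e1 + tau + r) (a1, a2)).
  set (g4 := append_flow g3 (e1 + tau + r + (s + tau)) (b1, b2)).
  set (u4 := append_control u3 (e1 + tau + r + (s + tau)) (b1, b2)).
  intros Hmin; apply Hmin. exists g4, u4, (e1 + tau + r + (s + tau) + r).
  split; [unfold s; lra|]. split; [|split].
  - apply admissible_append_flow; simpl; try tauto; try lra.
    apply admissible_append_flow; simpl; try tauto; try (unfold s; lra).
    apply admissible_append_flow; simpl; try tauto; try lra.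
    apply admissible_append_flow; simpl; try tauto; try lra.
    apply (admissible_restrict g u T); auto; lra.
  - unfold g4, g3, g2, g1. rewrite !append_flow_before by (unfold s; lra). reflexivity.
  - unfold g4, g3, g2, g1.
    rewrite !append_flow_after by (unfold s; lra).
    replace (e1 + tau - e1) with tau by ring.
    replace (e1 + tau + r - (e1 + tau)) with r by ring.
    replace (e1 + tau + r + (s + tau) - (e1 + tau + r)) with (s + tau) by ring.
    replace (e1 + tau + r + (s + tau) + r - (e1 + tau + r + (s + tau))) with r by ring.
    rewrite Hg. apply flow_five_arcs_shortcut; auto; unfold s; lra.
Qed.

Theorem mainTheorem5 (g : R -> R3) (T : R) (n : nat) :
  regular_bang_bang_arcs g T n -> (5 < n)%nat -> ~ time_minimizer g T.
Proof.
  intros [u [l [arcs [F [HE [Hnd [Hlen [Harcs Hcov]]]]]]]] Hn.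
  destruct (extremal_pair_ae g l u T HE) as [N [lam0 [HN HG]]].
  destruct HE as [Hadm [Hacl _]]. pose proof Hadm as (_ & Hacg & _).
  assert (Hext : extremal_data g l u lam0 T N) by (split; [|split; [|split]]; auto).
  assert (Hcover : arcs_cover l g T arcs F) by (split; auto).
  destruct (arcs_five_final l g T arcs F Hcover
              (arcs_cover_predecessor g l u lam0 T N Hext arcs F Hcover) n Hnd Hlen Hn)
    as (e1 & e2 & e3 & e4 & e5 & He1 & I1 & I2 & I3 & I4 & I5).
  destruct (five_arcs_shape g l u lam0 T N Hext e1 e2 e3 e4 e5 He1
              (Harcs _ I1) (Harcs _ I2) (Harcs _ I3) (Harcs _ I4) (Harcs _ I5))
    as (a1 & a2 & b1 & b2 & tau & Ha1 & Ha2 & Hb & Htau & HT & Hg).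
  exact (five_arcs_not_time_minimizer g u T e1 tau a1 a2 b1 b2 Hadm He1 Htau HT Ha1 Ha2 Hb Hg).
Qed.
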